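(* If $(X,\delta)$ is an $L_1$-embeddable diversity with induced metric $d(a,b)=\delta(\{a,b\})$, then for every finite $A=\{a_1,\dots,a_k\}\subseteq X$ (with $a_i$ distinct), \[ (|A|-1)\,\delta(A)\le\sum_{1\le i<j\le k}d(a_i,a_j). \]
   Context: A diversity on a set $X$ is a function $\delta$ from finite subsets of $X$ to $\mathbb{R}$ with $\delta(A)\ge 0$, $\delta(A)=0$ whenever $|A|\le 1$ (values $0$ on larger sets are allowed), and $\delta(A\cup B)+\delta(B\cup C)\ge\delta(A\cup C)$ for all finite $A,B,C$ with $B\neq\emptyset$. For a measure space $(\Omega,\mathcal{A},\mu)$, the $L_1$ diversity is $(L_1(\Omega,\mu),\delta_1)$ with $\delta_1(F)=\int_\Omega\max\{|f(\omega)-g(\omega)|:f,g\in F\}\,d\mu(\omega)$ for finite $F$. A diversity $(X,\delta)$ is $L_1$-embeddable if there is a map $\phi$ from $X$ into some $L_1$ diversity with $\delta_1(\phi(A))=\delta(A)$ for all finite $A\subseteq X$. *)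

From HB Require Import structures.
From mathcomp Require Import all_boot all_order all_algebra.
From mathcomp Require Import finmap.
From mathcomp Require Import all_classical all_reals all_analysis.

Set Implicit Arguments.
Unset Strict Implicit.
Unset Printing Implicit Defensive.

Import Order.TTheory GRing.Theory Num.Theory.
Local Open Scope ring_scope.

Definition is_diversity (R : realType) (X : choiceType) (delta : {fset X} -> R) : Prop :=
  [/\ (forall A : {fset X}, 0 <= delta A),
      (forall A : {fset X}, (#|` A| <= 1)%N -> delta A = 0) &
      (forall A B C : {fset X}, B != fset0 ->
          delta (fsetU A C) <= delta (fsetU A B) + delta (fsetU B C))].

(* The L1 diversity value of phi(A), where phi maps X into L1(T, mu):
   delta_1(phi(A)) = \int max_{f,g in phi(A)} |f - g| dmu
                  = \int max_{a,b in A} |phi a w - phi b w| dmu(w). *)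
Definition L1_div_image (R : realType) (d : measure_display) (T : measurableType d)
    (mu : {measure set T -> \bar R}) (X : choiceType) (phi : X -> T -> R)
    (A : {fset X}) : \bar R :=
  (\int[mu]_(w in [set: T])
     ((\big[Num.max/0]_(a <- A) \big[Num.max/0]_(b <- A) `|phi a w - phi b w|)%:E))%E.

Definition L1_embeddable (R : realType) (X : choiceType) (delta : {fset X} -> R) : Prop :=
  exists (d : measure_display) (T : measurableType d)
         (mu : {measure set T -> \bar R}) (phi : X -> T -> R),
    (forall x : X, mu.-integrable [set: T] (EFin \o phi x)) /\
    (forall A : {fset X}, L1_div_image mu phi A = (delta A)%:E).

From HB Require Import structures.
From mathcomp Require Import all_boot all_order all_algebra.
From mathcomp Require Import finmap.
From mathcomp Require Import all_classical all_reals all_analysis.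
From mathcomp Require Import measurable_realfun lra.

(* An L1 diversity is the integral over w of the diameter
   max_{a,b in A} |f_a(w) - f_b(w)| of the points f_a(w) on the real line, and
   the inequality is linear in the diversity, so it suffices to prove it
   pointwise in w.  There the diameter of the image of A is some |x_p - x_q|,
   and in any pseudometric space on k points
   (k - 1) d(p, q) <= sum_{i<j} d(i, j):
   the row sums F_i = sum_j d(i, j) satisfy F_i >= d(p, q) and
   F_p + F_q >= k d(p, q), and they add up to twice the sum over pairs. *)

Set Implicit Arguments.
Unset Strict Implicit.
Unset Printing Implicit Defensive.

Import Order.TTheory GRing.Theory Num.Theory.
Local Open Scope ring_scope.

Lemma lerD_sumr2 (R : realDomainType) (I : finType) (F : I -> R) p q :
  p != q -> (forall i, 0 <= F i) -> F p + F q <= \sum_i F i.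
Proof.
move=> npq F0; rewrite (bigD1 p) //= (bigD1 q) /=; last by rewrite eq_sym.
by rewrite addrA lerDl; apply: sumr_ge0.
Qed.

Section FinitePseudometric.
Variables (R : realFieldType) (k : nat) (dist : 'I_k -> 'I_k -> R).
Hypothesis dist_refl : forall i, dist i i = 0.
Hypothesis distC : forall i j, dist i j = dist j i.
Hypothesis dist_triangle : forall i j l, dist i l <= dist i j + dist j l.

Lemma dist_ge0 i j : 0 <= dist i j.
Proof.
by have := dist_triangle i j i; rewrite dist_refl (distC j i); lra.
Qed.

Lemma sum_dist_pairs_double :
  \sum_i \sum_j dist i j = (\sum_(i < k) \sum_(j < k | (i < j)%N) dist i j) *+ 2.
Proof.
have -> : \sum_(i < k) \sum_(j < k | (i < j)%N) dist i j
    = \sum_(i < k) \sum_(j < k) (if (i < j)%N then dist i j else 0).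
  by apply: eq_bigr => i _; rewrite big_mkcond.
rewrite mulr2n [X in _ = _ + X]exchange_big -big_split /=; apply: eq_bigr => i _.
rewrite -big_split /=; apply: eq_bigr => j _.
case: ltngtP => [_|_|/val_inj ->]; first by rewrite addr0.
  by rewrite add0r distC.
by rewrite dist_refl addr0.
Qed.

Lemma dist_le_sum_dist_pairs p q :
  (k%:R - 1) * dist p q <= \sum_(i < k) \sum_(j < k | (i < j)%N) dist i j.
Proof.
have [->|npq] := eqVneq p q.
  by rewrite dist_refl mulr0; do 2!apply: sumr_ge0 => ? _; apply: dist_ge0.
pose F i := \sum_j dist i j.
have F_ge i : dist p q <= F i.
  rewrite /F; apply: (le_trans _ (lerD_sumr2 npq (dist_ge0 i))).
  by rewrite (distC i p); apply: dist_triangle.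
have Fpq : \sum_(j < k) dist p q <= F p + F q.
  rewrite -big_split /=; apply: ler_sum => j _.
  by rewrite (distC q j); apply: dist_triangle.
rewrite sumr_const card_ord -mulr_natl in Fpq.
have F_excess : (F p - dist p q) + (F q - dist p q) <= \sum_i (F i - dist p q).
  by apply: lerD_sumr2 => // i; rewrite subr_ge0.
move: F_excess; rewrite sumrB sumr_const card_ord /F sum_dist_pairs_double.
rewrite -/(F p) -/(F q) mulr2n -mulr_natl; lra.
Qed.

End FinitePseudometric.

Lemma le_bigmaxr_seq (R : realDomainType) (T : eqType) (s : seq T) (F : T -> R) x :
  x \in s -> F x <= \big[Num.max/0]_(y <- s) F y.
Proof.
elim: s => // y s IH; rewrite inE big_cons le_max => /orP[/eqP->|/IH->].
  by rewrite lexx.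
by rewrite orbT.
Qed.

Lemma mulr_bigmaxr_seq_le (R : realDomainType) (T : eqType) (s : seq T) (F : T -> R) c b :
  0 <= b -> (forall x, x \in s -> c * F x <= b) ->
  c * \big[Num.max/0]_(x <- s) F x <= b.
Proof.
move=> b0 Fb; rewrite big_seq_cond.
apply: (big_ind (fun v => c * v <= b)); first by rewrite mulr0.
  by move=> x y hx hy; rewrite /Order.max; case: ifP.
by move=> x /andP[xs _]; apply: Fb.
Qed.

Lemma measurable_bigmaxr (d : measure_display) (T : measurableType d) (R : realType)
    (I : Type) (s : seq I) (h : I -> T -> R) :
  (forall i, measurable_fun setT (h i)) ->
  measurable_fun setT (fun w => \big[Num.max/0]_(i <- s) h i w).
Proof.
move=> mh; elim: s => [|i s IH].
  by under eq_fun do rewrite big_nil; apply: measurable_cst.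
under eq_fun do rewrite big_cons.
exact: measurable_maxr.
Qed.

Lemma ge0_le_integralZ_sum (d : measure_display) (T : measurableType d) (R : realType)
    (mu : {measure set T -> \bar R}) (I : Type) (s : seq I) (P : pred I)
    (f : T -> R) (g : I -> T -> R) (c : R) :
  0 <= c -> measurable_fun setT f -> (forall i, measurable_fun setT (g i)) ->
  (forall w, 0 <= f w) -> (forall i w, 0 <= g i w) ->
  (forall w, c * f w <= \sum_(i <- s | P i) g i w) ->
  (c%:E * \int[mu]_(w in setT) (f w)%:E
    <= \sum_(i <- s | P i) \int[mu]_(w in setT) (g i w)%:E)%E.
Proof.
move=> c0 mf mg f0 g0 fg.
rewrite -big_filter -ge0_integral_sum //; last 2 first.
- by move=> i; apply/measurable_EFinP.
- by move=> i w _; rewrite lee_fin.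
rewrite -ge0_integralZl_EFin //; last 2 first.
- by move=> w _; rewrite lee_fin.
- exact/measurable_EFinP.
apply: ge0_le_integral => //.
- by move=> w _; rewrite -EFinM lee_fin mulr_ge0.
- by under eq_fun do rewrite -EFinM; apply/measurable_EFinP/measurable_funM.
- by apply: emeasurable_sum => i; apply/measurable_EFinP.
by move=> w _; rewrite sumEFin big_filter -EFinM lee_fin.
Qed.

Section PointwiseDiameter.
Variables (R : realType) (X : choiceType) (T : Type) (phi : X -> T -> R).

Definition pointwise_diam (A : {fset X}) (w : T) : R :=
  \big[Num.max/0]_(u <- A) \big[Num.max/0]_(v <- A) `|phi u w - phi v w|.

Lemma pointwise_diam_ge0 A w : 0 <= pointwise_diam A w.
Proof.
apply: (big_ind (fun x : R => 0 <= x)) => // [x y x0 _|u _]; first by rewrite le_max x0.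
by apply: (big_ind (fun x : R => 0 <= x)) => // x y x0 _; rewrite le_max x0.
Qed.

Lemma dist_le_pointwise_diam (A : {fset X}) u v w :
  u \in A -> v \in A -> `|phi u w - phi v w| <= pointwise_diam A w.
Proof.
move=> uA vA; apply: le_trans (le_bigmaxr_seq _ uA).
exact: (le_bigmaxr_seq (fun v => `|phi u w - phi v w|) vA).
Qed.

Lemma pointwise_diam_le_sum_pairs k (a : 'I_k -> X) w :
  (k%:R - 1) * pointwise_diam [fset a i | i in 'I_k]%fset w
    <= \sum_(i < k) \sum_(j < k | (i < j)%N) pointwise_diam [fset a i; a j]%fset w.
Proof.
have sum_ge0 : 0 <= \sum_(i < k) \sum_(j < k | (i < j)%N) pointwise_diam [fset a i; a j]%fset w.
  by do 2!apply: sumr_ge0 => ? _; apply: pointwise_diam_ge0.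
apply: mulr_bigmaxr_seq_le => // _ /imfsetP[p _ ->].
apply: mulr_bigmaxr_seq_le => // _ /imfsetP[q _ ->].
pose dist i j := `|phi (a i) w - phi (a j) w|.
apply: (le_trans (@dist_le_sum_dist_pairs _ _ dist _ _ _ p q)).
- by move=> i; rewrite /dist subrr normr0.
- by move=> i j; rewrite /dist distrC.
- by move=> i j l; apply: ler_distD.
apply: ler_sum => i _; apply: ler_sum => j _.
by apply: dist_le_pointwise_diam; rewrite !inE eqxx ?orbT.
Qed.

End PointwiseDiameter.

Theorem proposition6 (R : realType) (X : choiceType) (delta : {fset X} -> R)
  (hdiv : is_diversity delta) (hemb : L1_embeddable delta)
  (k : nat) (a : 'I_k -> X) (ha : injective a) :
  (k%:R - 1) * delta [fset a i | i in 'I_k]%fset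
    <= \sum_(i < k) \sum_(j < k | (i < j)%N) delta [fset a i; a j]%fset.
Proof.
case: hdiv => delta_ge0 _ _.
case: k a {ha} => [|k] a; first by rewrite big_ord0 sub0r mulN1r oppr_le0.
case: hemb => d [T [mu [phi [phi_int delta_int]]]].
have mphi x : measurable_fun setT (phi x).
  exact/measurable_EFinP/(measurable_int _ (phi_int x)).
have mdiam A : measurable_fun setT (pointwise_diam phi A).
  do 2!apply: measurable_bigmaxr => ?.
  by apply: measurableT_comp => //; apply: measurable_funB.
rewrite pair_big_dep -lee_fin -sumEFin EFinM.
rewrite -delta_int; under eq_bigr do rewrite -delta_int.
apply: (@ge0_le_integralZ_sum _ _ _ mu _ _ _ (pointwise_diam phi _)
          (fun p => pointwise_diam phi [fset a p.1; a p.2]%fset)).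
- by rewrite subr_ge0 ler1n.
- exact: mdiam.
- by move=> p; apply: mdiam.
- by move=> w; apply: pointwise_diam_ge0.
- by move=> p w; apply: pointwise_diam_ge0.
by move=> w; apply: le_trans (pointwise_diam_le_sum_pairs phi a w) _; rewrite pair_big_dep.
Qed.
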